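(* Let $q\in\mathbb{C}^\times$ be not a root of unity and $k\in\mathbb{Z}_{>0}$. The polynomials $p_t(q)(x_1,\dots,x_k)$, $1\le t\le k$, are algebraically independent over $\mathbb{C}$.
   Context: For $t,k>0$, $p_t(q)(x_1,\dots,x_k)=\sum_{\lambda\vdash t,\ \ell(\lambda)\le k}q^{-\ell(\lambda)}(q-q^{-1})^{\ell(\lambda)-1}m_\lambda(x_1,\dots,x_k)\in\mathbb{C}[x_1,\dots,x_k]$, where $\lambda$ runs over partitions of $t$ with at most $k$ nonzero parts ($\ell(\lambda)$ the number of nonzero parts) and $m_\lambda$ is the monomial symmetric polynomial. *)

From HB Require Import structures.
From mathcomp Require Import all_boot all_order all_algebra.
From mathcomp Require Import reals.
From mathcomp Require Import complex.
From mathcomp Require Import mpoly.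
Set Implicit Arguments. Unset Strict Implicit. Unset Printing Implicit Defensive.
Import Order.TTheory GRing.Theory Num.Theory.
Local Open Scope ring_scope.

(* Partitions of t with at most k parts, encoded as bounded monomials
   lam : 'X_{1..k < t.+1} (i.e. k-tuples of naturals, padded by zeros)
   whose entries are nonincreasing and sum to t. *)
Definition is_partition_k (k t : nat) (lam : 'X_{1..k < t.+1}) : bool :=
  (mdeg lam == t) && sorted geq (val (val (val lam))).

Definition plen (k : nat) (m : 'X_{1..k}) : nat := count (fun a => a != 0)%N (val m).

Definition msymm (F : nzRingType) (k b : nat) (lam : 'X_{1..k < b}) : {mpoly F[k]} :=
  \sum_(a : 'X_{1..k < b} | perm_eq (val (val (val a))) (val (val (val lam)))) 'X_[(a : 'X_{1..k})].

Definition p_poly (F : fieldType) (q : F) (k t : nat) : {mpoly F[k]} :=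
  \sum_(lam : 'X_{1..k < t.+1} | is_partition_k lam)
     (q ^- (plen (lam : 'X_{1..k})) * (q - q^-1) ^+ (plen (lam : 'X_{1..k})).-1) *: @msymm F k t.+1 lam.

Definition alg_indep (F : fieldType) (n k : nat) (ps : k.-tuple {mpoly F[n]}) : Prop :=
  forall P : {mpoly F[k]}, P \mPo ps = 0 -> P = 0.

From HB Require Import structures.
From mathcomp Require Import all_boot all_order all_algebra.
From mathcomp Require Import reals complex mpoly.
From mathcomp Require Import ring.
Import Order.TTheory GRing.Theory Num.Theory.
Local Open Scope ring_scope.
Set Implicit Arguments. Unset Strict Implicit. Unset Printing Implicit Defensive.

(* Put d = q - q^-1 and r = d / q.  Since r^l q^l = d^l, the generating series
   of the p_t is 1 + d \sum_t p_t X^t = \prod_i (1 + r x_i X / (1 - x_i X)),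
   and multiplying it by \prod_i (1 - x_i X) = \sum_t (-1)^t e_t X^t gives
   \prod_i (1 + (r - 1) x_i X) with r - 1 = - q^-2.  Comparing coefficients,
     d \sum_(1 <= j <= t) (-1)^(t-j) p_j e_(t-j) = ((-q^-2)^t - (-1)^t) e_t,
   and the factor on the right is nonzero because q is not a root of unity.
   This triangular system writes each e_t as a polynomial G_t in p_1, ..., p_t
   and, conversely, each variable as a polynomial in G_1, ..., G_k.  Hence if
   P(p) = 0, then P = Q(G) for some Q, so Q(e) = P(p) = 0; by the fundamental
   theorem on symmetric polynomials Q = 0, and thus P = 0. *)

Section Composition.
Variable R : comNzRingType.

Lemma comp_mpolyA n k l (P : {mpoly R[n]}) (G : n.-tuple {mpoly R[k]})
    (L : k.-tuple {mpoly R[l]}) :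
  (P \mPo G) \mPo L = P \mPo [tuple tnth G i \mPo L | i < n].
Proof.
rewrite (comp_mpolyEX P G) raddf_sum [RHS]comp_mpolyEX; apply: eq_bigr => m _.
rewrite -[LHS]/(comp_mpoly L _) linearZ /= !comp_mpolyX rmorph_prod; congr (_ *: _).
by apply: eq_bigr => i _; rewrite rmorphXn tnth_mktuple.
Qed.

Section CompRange.
Variables n k : nat.
Implicit Type G : n.-tuple {mpoly R[k]}.

Definition comp_range G (x : {mpoly R[k]}) : Prop := exists P, P \mPo G = x.

Lemma comp_rangeB G x y : comp_range G x -> comp_range G y -> comp_range G (x - y).
Proof. by move=> [P <-] [Q <-]; exists (P - Q); rewrite raddfB. Qed.

Lemma comp_rangeM G x y : comp_range G x -> comp_range G y -> comp_range G (x * y).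
Proof. by move=> [P <-] [Q <-]; exists (P * Q); rewrite rmorphM. Qed.

Lemma comp_rangeZ G a x : comp_range G x -> comp_range G (a *: x).
Proof. by move=> [P <-]; exists (a *: P); rewrite linearZ. Qed.

Lemma comp_range_sum G I (r : seq I) (Pr : pred I) (f : I -> {mpoly R[k]}) :
  (forall i, Pr i -> comp_range G (f i)) -> comp_range G (\sum_(i <- r | Pr i) f i).
Proof.
move=> Pf; apply: big_ind => //; first by exists 0; rewrite raddf0.
by move=> x y [P <-] [Q <-]; exists (P + Q); rewrite raddfD.
Qed.

End CompRange.

Lemma comp_range_all n (G : n.-tuple {mpoly R[n]}) :
  (forall i, comp_range G 'X_i) -> forall x, comp_range G x.
Proof.
move=> /fin_all_exists [P PG] x; exists (x \mPo [tuple P i | i < n]).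
rewrite comp_mpolyA -[RHS](comp_mpoly_id x); congr (x \mPo _).
by apply: eq_from_tnth => i; rewrite !tnth_mktuple PG.
Qed.

End Composition.

Lemma coef_prod_addXn (R : comNzRingType) I (r : seq I) (A B : I -> {poly R}) N t :
  (t < N)%N -> (\prod_(i <- r) (A i + 'X^N * B i))`_t = (\prod_(i <- r) A i)`_t.
Proof.
move=> tN; suff [D ->] : exists D, \prod_(i <- r) (A i + 'X^N * B i) =
    \prod_(i <- r) A i + 'X^N * D by rewrite coefD coefXnM tN addr0.
apply: (big_rec2 (fun y1 y2 => exists D, y1 = y2 + 'X^N * D)).
  by exists 0; rewrite mulr0 addr0.
by move=> i _ y _ [D ->]; exists (B i * y + A i * D + 'X^N * B i * D); ring.
Qed.

Section WeightedSymmetric.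
Variables (R : comNzRingType) (k : nat).
Implicit Types (f : nat -> R) (r b : R) (N t : nat).

Definition mnm_of_ffun N (a : {ffun 'I_k -> 'I_N}) : 'X_{1..k} :=
  [multinom (a i : nat) | i < k].

Lemma mnm_of_ffun_inj N : injective (@mnm_of_ffun N).
Proof.
move=> a b /mnmP eq_ab; apply/ffunP => i; apply/val_inj.
by have := eq_ab i; rewrite !mnmE.
Qed.

(* Monomials with all exponents below N are enumerated as functions
   'I_k -> 'I_N, so that [\prod_i wgen f N i] expands termwise (bigA_distr_bigA). *)
Definition wmsym f N t : {mpoly R[k]} :=
  \sum_(a : {ffun 'I_k -> 'I_N} | mdeg (mnm_of_ffun a) == t)
     (\prod_i f (a i)) *: 'X_[mnm_of_ffun a].

Lemma mcoeff_wmsym f N t m : (wmsym f N t)@_m =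
  ((mdeg m == t) && [forall i, m i < N]%N)%:R * \prod_i f (m i).
Proof.
rewrite raddf_sum /=; under eq_bigr => a _ do rewrite mcoeffZ mcoeffX.
case: (boolP [forall i, m i < N]%N) => [/forallP mN | mN]; last first.
  rewrite andbF mul0r big1 // => a _; case: eqP => [ma|]; last by rewrite mulr0.
  by case/negP: mN; apply/forallP => i; rewrite -ma mnmE.
pose a0 : {ffun 'I_k -> 'I_N} := [ffun i => Ordinal (mN i)].
have ma0 : mnm_of_ffun a0 = m by apply/mnmP => i; rewrite mnmE ffunE.
have eq_a0 a : (mnm_of_ffun a == m) = (a == a0).
  by rewrite -ma0 (inj_eq (@mnm_of_ffun_inj N)).
under eq_bigr => a _ do rewrite eq_a0.
rewrite big_mkcond (bigD1 a0) //= [X in _ + X]big1 ?addr0; last first.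
  by move=> a /negbTE ->; case: ifP; rewrite ?mulr0.
rewrite eqxx mulr1 ma0 andbT; case: eqP; rewrite ?mul1r ?mul0r // => _.
by apply: eq_bigr => i _; rewrite ffunE.
Qed.

Definition wgen f N (i : 'I_k) : {poly {mpoly R[k]}} :=
  \sum_(n < N) (f n)%:MP%:P * (('X_i)%:P * 'X) ^+ n.

Lemma coef_prod_wgen f N t : (\prod_i wgen f N i)`_t = wmsym f N t.
Proof.
rewrite bigA_distr_bigA /= coef_sum [RHS]big_mkcond /=; apply: eq_bigr => a _.
set m := mnm_of_ffun a.
have -> : \prod_i ((f (a i))%:MP%:P * (('X_i)%:P * 'X) ^+ a i) =
    ((\prod_i f (a i)) *: 'X_[m])%:P * 'X^(mdeg m).
  rewrite big_split /= -mul_mpolyC polyCM -mulrA !rmorph_prod; congr (_ * _).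
  under eq_bigr do rewrite exprMn; rewrite big_split /= mdegE -prodrXr.
  rewrite mpolyXE_id rmorph_prod; congr (_ * _); apply: eq_bigr => i _.
    by rewrite rmorphXn mnmE.
  by rewrite mnmE.
by rewrite coefCM coefXn eq_sym; case: eqP; rewrite ?mulr1 ?mulr0.
Qed.

Definition plen_weight r n : R := if n is 0 then 1 else r.

Lemma prod_plen_weight r (m : 'X_{1..k}) : \prod_i plen_weight r (m i) = r ^+ plen m.
Proof.
rewrite /plen; transitivity (\prod_(x <- val m) plen_weight r x); first by rewrite big_tuple.
elim: (tval (val m)) => [|x s IH]; first by rewrite big_nil.
by rewrite big_cons IH; case: x => [|x] /=; rewrite ?mul1r ?exprS.
Qed.

Lemma wmsym_expr b t : wmsym (fun n => b ^+ n) 2 t = b ^+ t *: mesym k R t.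
Proof.
apply/mpolyP => m; rewrite mcoeff_wmsym mcoeffZ mcoeff_mesym /mechar prodrXr -mdegE.
have -> : [forall i, m i < 2]%N = [forall i, m i <= 1]%N by [].
by case: eqP => [->|]; rewrite ?mul0r ?mulr0 // mulrC.
Qed.

Lemma wmsym0 f N : f 0%N = 1 -> wmsym f N.+1 0 = 1.
Proof.
move=> f0; apply/mpolyP => m; rewrite mcoeff_wmsym mcoeff1 mdeg_eq0.
case: eqP => [->|]; last by rewrite mul0r.
have -> : [forall i, (0%MM : 'X_{1..k}) i < N.+1]%N.
  by apply/forallP => i; rewrite mnm0E.
by rewrite mul1r big1 // => i _; rewrite mnm0E.
Qed.

Lemma wgen_expr2 b i : wgen (fun n => b ^+ n) 2 i = 1 + b%:MP%:P * (('X_i)%:P * 'X).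
Proof. by rewrite /wgen big_ord_recr big_ord1 /= !expr0 expr1 mpolyC1 polyC1 mulr1. Qed.

Lemma wgen_plen_weight_mul r N i :
  wgen (plen_weight r) N.+1 i * wgen (fun n => (-1) ^+ n) 2 i =
  wgen (fun n => (r - 1) ^+ n) 2 i + 'X^(N.+1) * - (r *: 'X_i ^+ N.+1)%:P.
Proof.
rewrite !wgen_expr2 mpolyCB mpolyCN mpolyC1 polyCB polyCN polyC1.
set u := ('X_i)%:P * 'X; set S := \sum_(n < N) u ^+ n.
have -> : 'X^(N.+1) * - (r *: 'X_i ^+ N.+1)%:P = - r%:MP%:P * u ^+ N.+1.
  by rewrite exprMn -mul_mpolyC polyCM rmorphXn; ring.
have -> : wgen (plen_weight r) N.+1 i = 1 + r%:MP%:P * (u * S).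
  rewrite /wgen big_ord_recl /= expr0 mpolyC1 polyC1 mulr1 !mulr_sumr; congr (_ + _).
  by apply: eq_bigr => n _; rewrite exprS.
have geom : S * (1 - u) = 1 - u ^+ N by rewrite mulrC -opprB mulNr -subrX1 opprB.
clearbody u S.
transitivity (1 - u + r%:MP%:P * u * (S * (1 - u))); first by ring.
by rewrite geom exprS; ring.
Qed.

Lemma wmsym_plen_weight_conv r N t : (t <= N)%N ->
  \sum_(j < t.+1) wmsym (plen_weight r) N.+1 j * wmsym (fun n => (-1) ^+ n) 2 (t - j) =
  wmsym (fun n => (r - 1) ^+ n) 2 t.
Proof.
move=> tN; under eq_bigr do rewrite -!coef_prod_wgen.
rewrite -coef_prod_wgen -coefM -big_split /=.
under eq_bigr do rewrite wgen_plen_weight_mul.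
by rewrite coef_prod_addXn.
Qed.

End WeightedSymmetric.

Section PPolyCoefficients.
Variables (F : fieldType) (k : nat).
Implicit Types (m : 'X_{1..k}) (q : F).

Lemma mdeg_perm m1 m2 : perm_eq (val (val m1)) (val (val m2)) -> mdeg m1 = mdeg m2.
Proof. by move=> pm; rewrite /mdeg (perm_big _ pm). Qed.

Lemma plen_perm m1 m2 : perm_eq (val (val m1)) (val (val m2)) -> plen m1 = plen m2.
Proof. by move=> /permP pm; rewrite /plen pm. Qed.

Lemma plen_eq0 m : plen m = 0%N -> mdeg m = 0%N.
Proof.
rewrite /plen /mdeg => /eqP; rewrite -leqn0 leqNgt -has_count => /hasPn m0.
by rewrite big_seq big1 // => x /m0 /negbNE /eqP.
Qed.

Lemma mcoeff_msymm b (lam : 'X_{1..k < b}) m :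
  (msymm F lam)@_m = (perm_eq (val (val m)) (val (val (val lam))))%:R.
Proof.
rewrite raddf_sum /=; under eq_bigr do rewrite mcoeffX.
case: (boolP (perm_eq _ _)) => [pm | npm]; last first.
  by rewrite big1 // => a pa; case: eqP => // am; rewrite -am pa in npm.
have mb : (mdeg m < b)%N by rewrite (mdeg_perm pm) bmdeg.
rewrite (bigD1 (BMultinom mb)) //= eqxx big1 ?addr0 // => a /andP[_ na].
by case: eqP => // am; case/eqP: na; apply: val_inj.
Qed.

Lemma mcoeff_p_poly q t m : (p_poly q k t)@_m =
  (mdeg m == t)%:R * (q ^- plen m * (q - q^-1) ^+ (plen m).-1).
Proof.
rewrite raddf_sum /=; under eq_bigr do rewrite mcoeffZ mcoeff_msymm.
have [mt | mt] := eqVneq (mdeg m) t; last first.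
  rewrite mul0r big1 // => lam /andP[/eqP lamt _].
  case: (boolP (perm_eq _ _)) => [/mdeg_perm mlam|_]; last by rewrite mulr0.
  by rewrite mlam lamt eqxx in mt.
pose lamm : 'X_{1..k} := Multinom (sort_tuple geq (val m)).
have plm : perm_eq (val (val lamm)) (val (val m)) by rewrite perm_sort.
have lamb : (mdeg lamm < t.+1)%N by rewrite (mdeg_perm plm) mt.
have part : is_partition_k (BMultinom lamb).
  by rewrite /is_partition_k /= (mdeg_perm plm) mt eqxx sort_sorted //; apply: ge_total.
rewrite (bigD1 _ part) /= perm_sym plm mulr1 big1 ?addr0; last first.
  move=> lam /andP[/andP[_ slam] nlam].
  case: (boolP (perm_eq _ _)) => [pml|]; last by rewrite mulr0.
  case/eqP: nlam; do 3 apply: val_inj.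
  apply: (sorted_eq (@ge_trans _ nat) (@ge_anti _ nat)) => //.
    by rewrite sort_sorted //; apply: ge_total.
  by rewrite perm_sym (perm_trans plm).
by rewrite mul1r (plen_perm plm).
Qed.

Lemma wmsym_plen_weight_p_poly q N t : q != 0 -> (0 < t <= N)%N ->
  wmsym k (plen_weight ((q - q^-1) / q)) N.+1 t = (q - q^-1) *: p_poly q k t.
Proof.
move=> q0 /andP[t0 tN]; apply/mpolyP => m.
rewrite mcoeff_wmsym mcoeffZ mcoeff_p_poly prod_plen_weight.
have [mt|_] := eqVneq (mdeg m) t; last by rewrite !mul0r mulr0.
have -> : [forall i, m i < N.+1]%N.
  apply/forallP => i; rewrite ltnS (leq_trans _ tN) // -mt mdegE.
  by rewrite (bigD1 i) //= leq_addr.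
case hl: (plen m) => [|l]; first by move: t0; rewrite -mt plen_eq0.
rewrite /= !mul1r expr_div_n exprS; field.
by rewrite expf_neq0.
Qed.

End PPolyCoefficients.

Section Shift.
Variables (R : comNzRingType) (k : nat).

(* The variable standing for p_t: 'X_(t - 1) if 0 < t <= k, and 0 otherwise. *)
Definition Xshift t : {mpoly R[k]} := \sum_(i < k | i.+1 == t) 'X_i.

Lemma XshiftS (i : 'I_k) : 'X_i = Xshift i.+1.
Proof. by rewrite /Xshift (big_pred1 i) // => j /=; rewrite eqSS. Qed.

Lemma Xshift_mPo n (f : nat -> {mpoly R[n]}) t : (0 < t <= k)%N ->
  Xshift t \mPo [tuple f i.+1 | i < k] = f t.
Proof.
case: t => [//|t] /= tk.
by rewrite -[t]/(nat_of_ord (Ordinal tk)) -XshiftS comp_mpolyXU -tnth_nth tnth_mktuple.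
Qed.

End Shift.
Arguments Xshift {R k} t.

Section Inversion.
Variables (F : fieldType) (k : nat) (q : F).
Hypotheses (q_neq0 : q != 0) (q_not_root : forall n, (0 < n)%N -> q ^+ n != 1).

Let d := q - q^-1.
Let alpha t : F := (- q ^- 2) ^+ t - (-1) ^+ t.

Lemma d_neq0 : d != 0.
Proof.
apply: contra (q_not_root (isT : (0 < 2)%N)); rewrite subr_eq0 => /eqP qV.
by rewrite expr2 {2}qV mulfV.
Qed.

Lemma alpha_neq0 t : (0 < t)%N -> alpha t != 0.
Proof.
move=> t0; rewrite /alpha (exprNn (q ^- 2)) -[X in _ - X]mulr1 -mulrBr.
rewrite mulf_neq0 ?signr_eq0 //.
by rewrite subr_eq0 exprVn -exprM invr_eq1 q_not_root // muln_gt0.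
Qed.

Lemma p_poly_mesym_conv t : (0 < t <= k)%N ->
  d *: \sum_(j < t) (-1) ^+ (t - j.+1) *: (p_poly q k j.+1 * mesym k F (t - j.+1)) =
  alpha t *: mesym k F t.
Proof.
case/andP=> t0 tk; have := wmsym_plen_weight_conv k (d / q) tk.
rewrite big_ord_recl wmsym0 // subn0 !wmsym_expr mul1r.
have -> : d / q - 1 = - q ^- 2 by rewrite /d; field.
move=> conv; rewrite /alpha [RHS]scalerBl -conv addrAC subrr add0r scaler_sumr.
apply: eq_bigr => j _.
rewrite lift0 wmsym_plen_weight_p_poly ?ltn0Sn ?(leq_trans (ltn_ord j)) // wmsym_expr.
by rewrite -scalerAl -scalerAr.
Qed.

(* n is fuel: esym_poly n t is the intended G_t only when t <= n. *)
Fixpoint esym_poly n t : {mpoly F[k]} :=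
  if n is n'.+1 then
    if t is 0 then 1 else
      (d / alpha t) *: \sum_(j < t)
         (-1) ^+ (t - j.+1) *: (Xshift j.+1 * esym_poly n' (t - j.+1)%N)
  else 1.

Lemma esym_poly0 n : esym_poly n 0 = 1.
Proof. by case: n. Qed.

Lemma esym_poly_fuel n m t : (t <= n)%N -> (t <= m)%N -> esym_poly n t = esym_poly m t.
Proof.
elim: n m t => [|n IH] [|m] [|t] //= tn tm; congr (_ *: _); apply: eq_bigr => j _.
by rewrite (IH m) // subSS (leq_trans (leq_subr _ _)).
Qed.

Lemma esym_polyS t : (0 < t <= k)%N -> esym_poly k t =
  (d / alpha t) *: \sum_(j < t) (-1) ^+ (t - j.+1) *: (Xshift j.+1 * esym_poly k (t - j.+1)).
Proof.
case: t => [//|t] /andP[_ tk].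
rewrite (esym_poly_fuel (m := t.+1)) //=; congr (_ *: _); apply: eq_bigr => j _.
rewrite (esym_poly_fuel (n := t) (m := k)) subSS ?leq_subr //.
exact: leq_trans (leq_subr _ _) (ltnW tk).
Qed.

Definition p_tuple := [tuple p_poly q k i.+1 | i < k].
Definition esym_tuple := [tuple esym_poly k i.+1 | i < k].

Lemma esym_poly_mPo t : (t <= k)%N -> esym_poly k t \mPo p_tuple = mesym k F t.
Proof.
elim/ltn_ind: t => [[|t]] IH tk; first by rewrite esym_poly0 comp_mpoly1 mesym0E.
rewrite esym_polyS // comp_mpolyZ (raddf_sum (comp_mpoly p_tuple)) /=.
under eq_bigr => j _.
  have jk : (j.+1 <= k)%N := leq_trans (ltn_ord j) tk.
  rewrite comp_mpolyZ rmorphM /= Xshift_mPo // IH subSS ?ltnS ?leq_subr //; last first.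
    exact: leq_trans (leq_subr _ _) (ltnW tk).
  over.
by rewrite mulrC -scalerA p_poly_mesym_conv // scalerA mulVf ?alpha_neq0 // scale1r.
Qed.

Lemma esym_poly_comp_range t : (0 < t <= k)%N -> comp_range esym_tuple (esym_poly k t).
Proof. by exists (Xshift t); rewrite Xshift_mPo. Qed.

Lemma Xshift_comp_range t : (0 < t <= k)%N -> comp_range esym_tuple (Xshift t).
Proof.
elim/ltn_ind: t => [[|t]] IH // tk; have tk' : (t < k)%N := tk.
have -> : Xshift t.+1 = (alpha t.+1 / d) *: esym_poly k t.+1 -
    \sum_(j < t) (-1) ^+ (t - j) *: (Xshift j.+1 * esym_poly k (t - j)).
  rewrite esym_polyS // big_ord_recr /= subnn expr0 esym_poly0 mulr1 scale1r scalerA.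
  rewrite [_ / d * _]mulrC mulrA divfK ?alpha_neq0 // mulfV ?d_neq0 // scale1r.
  by under eq_bigr do rewrite subSS; rewrite addrAC subrr add0r.
apply: comp_rangeB; first exact/comp_rangeZ/esym_poly_comp_range.
apply: comp_range_sum => j _; apply: comp_rangeZ; apply: comp_rangeM.
  have jt : (j.+1 < t.+1)%N by rewrite ltnS.
  by apply: IH => //; exact: ltnW (leq_trans jt tk').
apply: esym_poly_comp_range.
by rewrite subn_gt0 ltn_ord (leq_trans (leq_subr _ _) (ltnW tk')).
Qed.

Lemma p_tuple_mPo_inj P : P \mPo p_tuple = 0 -> P = 0.
Proof.
have X_range (i : 'I_k) : comp_range esym_tuple 'X_i.
  by rewrite XshiftS; apply: Xshift_comp_range; exact: ltn_ord.
have [Q <-] := comp_range_all X_range P.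
rewrite comp_mpolyA.
have -> : [tuple tnth esym_tuple i \mPo p_tuple | i < k] = [tuple mesym k F i.+1 | i < k].
  by apply: eq_from_tnth => i; rewrite !tnth_mktuple esym_poly_mPo.
by move/msym_fundamental_un0 ->; rewrite comp_mpoly0.
Qed.

End Inversion.

Theorem mainTheorem17 (R : realType) (q : R[i]) (k : nat) :
  q != 0 ->
  (forall n : nat, (0 < n)%N -> ~~ n.-unity_root q) ->
  (0 < k)%N ->
  alg_indep [tuple p_poly q k (i.+1) | i < k].
Proof.
move=> q_neq0 q_not_root _ P; apply: p_tuple_mPo_inj => // n n_gt0.
by rewrite -unity_rootE q_not_root.
Qed.
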